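(* Consider a matched pair study ($n_i=2$ for all $i$) and assume Fisher's null $H_0$ holds. Let $1\le k\le I$ and $\Gamma_0\in[1,\infty]$. If $\Gamma^\star_{(k)}\le\Gamma_0$, then $\mathbb P(T\ge c)\le\mathbb P(\overline T(\Gamma_0;k)\ge c)$ for all $c\in\mathbb R$, where $\overline T(\Gamma_0;k)=\overline T(\Gamma_0\mathbf 1_{\mathcal I_k}+\infty\cdot\mathbf 1_{\mathcal I_k^c})$ and $\mathcal I_k$ is a set of indices of $k$ pairs with the $k$ smallest values of $|q_{i1}-q_{i2}|$. Explicitly, $\overline T(\Gamma_0;k)$ is a sum of independent variables: for $i\in\mathcal I_k$ the $i$th equals $\max\{q_{i1},q_{i2}\}$ with probability $\Gamma_0/(1+\Gamma_0)$ and $\min\{q_{i1},q_{i2}\}$ otherwise; for $i\notin\mathcal I_k$ it equals $\max\{q_{i1},q_{i2}\}$ with probability 1.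
   Context: Setting: $I$ matched sets; set $i$ has $n_i\ge2$ units, $N=\sum_in_i$; potential outcomes fixed; $Z\in\mathcal Z=\{z\in\{0,1\}^N:\sum_jz_{ij}=1\ \forall i\}$ is the only randomness. True mechanism $\mathbb P(Z=z)=\prod_i\prod_j(p^\star_{ij})^{z_{ij}}$, $p^\star_{ij}\ge0$, $\sum_jp^\star_{ij}=1$; true hidden bias $\Gamma^\star_i=\max_jp^\star_{ij}/\min_kp^\star_{ik}\in[1,\infty]$ ($\infty$ if the minimum is 0); $\Gamma^\star_{(1)}\le\dots\le\Gamma^\star_{(I)}$ are the sorted values. Fisher's null $H_0$: $Y_{ij}(1)=Y_{ij}(0)$ for all $i,j$. $T=\sum_i\sum_jZ_{ij}q_{ij}$ with $q_{ij}$ fixed functions of $Y(0)$. $\mathbf 1_{\mathcal I}$ is the indicator vector of $\mathcal I\subset\{1,\dots,I\}$, $\infty\cdot\mathbf 1_{\mathcal I}$ the vector with entries $\infty$ on $\mathcal I$ and $0$ elsewhere, and $\mathcal I^c$ the complement. For $\Gamma\in[1,\infty]^I$, $\overline T(\Gamma)$ is a sum of independent variables, the $i$th equal to $\max\{q_{i1},q_{i2}\}$ with probability $\Gamma_i/(1+\Gamma_i)$ (probability 1 if $\Gamma_i=\infty$) and $\min\{q_{i1},q_{i2}\}$ otherwise. *)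

From HB Require Import structures.
From mathcomp Require Import all_boot all_order all_algebra.
From mathcomp Require Import reals constructive_ereal.
Set Implicit Arguments. Unset Strict Implicit. Unset Printing Implicit Defensive.
Import Order.TTheory GRing.Theory Num.Theory.
Local Open Scope ring_scope.

(* Matched pairs: I pairs indexed by 'I_I, units within a pair by 'I_2.
   A treatment assignment z picks the treated unit in each pair. *)

Section Defs.
Variable R : realType.
Variable I : nat.

Definition assign_prob (p : 'I_I -> 'I_2 -> R) (z : {ffun 'I_I -> 'I_2}) : R :=
  \prod_(i < I) p i (z i).

(* T = sum_i sum_j Z_ij q_ij = sum_i q i (z i) *)
Definition Tstat (q : 'I_I -> 'I_2 -> R) (z : {ffun 'I_I -> 'I_2}) : R :=
  \sum_(i < I) q i (z i).

Definition prob_T_ge (p q : 'I_I -> 'I_2 -> R) (c : R) : R :=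
  \sum_(z : {ffun 'I_I -> 'I_2}) assign_prob p z * (if c <= Tstat q z then 1 else 0).

Definition gamma_star (pi : 'I_2 -> R) : \bar R :=
  let mn := Num.min (pi ord0) (pi ord_max) in
  let mx := Num.max (pi ord0) (pi ord_max) in
  if mn == 0 then +oo%E else (mx / mn)%:E.

(* k-th smallest (1-based) of the Gamma*_i, i.e. Gamma*_(k) *)
Definition gamma_order_stat (p : 'I_I -> 'I_2 -> R) (k : nat) : \bar R :=
  nth +oo%E (sort (fun x y : \bar R => (x <= y)%E)
                  [seq gamma_star (p i) | i <- enum 'I_I]) k.-1.

(* probability that the i-th summand of Tbar(Gamma) is max{q_i1,q_i2}:
   Gamma/(1+Gamma), or 1 if Gamma = +oo *)
Definition upper_prob (g : \bar R) : R :=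
  match g with
  | (x%:E)%E => x / (1 + x)
  | (+oo)%E => 1
  | (-oo)%E => 0
  end.

Definition prob_Tbar_ge (G : 'I_I -> \bar R) (q : 'I_I -> 'I_2 -> R) (c : R) : R :=
  \sum_(b : {ffun 'I_I -> bool})
     (\prod_(i < I) (if b i then upper_prob (G i) else 1 - upper_prob (G i))) *
     (if c <= \sum_(i < I) (if b i then Num.max (q i ord0) (q i ord_max)
                                   else Num.min (q i ord0) (q i ord_max))
      then 1 else 0).

Definition gamma_vec (G0 : \bar R) (Ik : {set 'I_I}) : 'I_I -> \bar R :=
  fun i => if i \in Ik then G0 else +oo%E.

End Defs.

(* Label each pair by a coin that is heads when its unit with the larger q is
   treated.  Under H0 these coins are independent with heads probabilities
   a_i = p_i(larger unit), and T >= c is an increasing event of the coins, so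
   P(T >= c) can only grow when any a_i is raised.  A pair with
   Gamma*_i <= Gamma0 has a_i <= beta := Gamma0/(1+Gamma0), and by the order
   statistic hypothesis at least k pairs do; raising these a_i to beta and all
   others to 1 leaves k coins of bias beta.  Finally, exchanging a biased coin
   on a pair with a wide gap |q_i1 - q_i2| with a sure coin on a pair with a
   narrower gap can only raise the tail probability, and such exchanges move
   the biased coins onto I_k. *)

From HB Require Import structures.
From mathcomp Require Import all_boot all_order all_algebra perm.
From mathcomp Require Import reals constructive_ereal.
From mathcomp Require Import lra.
Import Order.TTheory GRing.Theory Num.Theory.
Local Open Scope ring_scope.
Set Implicit Arguments. Unset Strict Implicit. Unset Printing Implicit Defensive.

Section IndependentCoins.
Variables (R : realType) (I : nat).
Local Notation coins := {ffun 'I_I -> bool}.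

Definition coin_weight (b : 'I_I -> R) (w : coins) : R :=
  \prod_(i < I) (if w i then b i else 1 - b i).

Definition coin_mean (b : 'I_I -> R) (h : coins -> R) : R :=
  \sum_(w : coins) coin_weight b w * h w.

Definition coin_sum (lo hi : 'I_I -> R) (w : coins) : R :=
  \sum_(i < I) (if w i then hi i else lo i).

Definition ind_ge (c x : R) : R := if c <= x then 1 else 0.

Definition coin_tail (lo hi : 'I_I -> R) (c : R) (w : coins) : R :=
  ind_ge c (coin_sum lo hi w).

Definition monotone_coins (h : coins -> R) :=
  forall w1 w2 : coins, (forall i, w1 i -> w2 i) -> h w1 <= h w2.

Definition upd (b : 'I_I -> R) (j : 'I_I) (x : R) : 'I_I -> R :=
  fun i => if i == j then x else b i.

Definition flip (j : 'I_I) (w : coins) : coins :=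
  [ffun i => if i == j then ~~ w i else w i].

Definition biased (beta : R) (S : {set 'I_I}) : 'I_I -> R :=
  fun i => if i \in S then beta else 1.

Lemma flipK j : involutive (flip j).
Proof. by move=> w; apply/ffunP => i; rewrite !ffunE; case: eqP; rewrite ?negbK. Qed.

Lemma ind_ge_le c x y : x <= y -> ind_ge c x <= ind_ge c y.
Proof.
by move=> xy; rewrite /ind_ge; case: ifP => [cx|_]; [rewrite (le_trans cx xy)|case: ifP].
Qed.

Lemma coin_weight_ge0 b w : (forall i, 0 <= b i <= 1) -> 0 <= coin_weight b w.
Proof.
move=> b01; apply: prodr_ge0 => i _; have /andP[b0 b1] := b01 i.
by case: (w i); rewrite ?subr_ge0.
Qed.

Lemma eq_coin_mean b b' h : b =1 b' -> coin_mean b h = coin_mean b' h.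
Proof.
by move=> eb; apply: eq_bigr => w _; congr (_ * _); apply: eq_bigr => i _; rewrite eb.
Qed.

Lemma coin_tail_monotone lo hi c :
  (forall i, lo i <= hi i) -> monotone_coins (coin_tail lo hi c).
Proof.
move=> lohi w1 w2 w12; apply/ind_ge_le/ler_sum => i _.
by case E1: (w1 i); [rewrite (w12 i E1)|case: (w2 i)].
Qed.

Definition coin_weight_off (b : 'I_I -> R) (j : 'I_I) (w : coins) : R :=
  \prod_(i < I | i != j) (if w i then b i else 1 - b i).

Lemma coin_weightD1 b j w :
  coin_weight b w = (if w j then b j else 1 - b j) * coin_weight_off b j w.
Proof. by rewrite /coin_weight (bigD1 j). Qed.

Lemma coin_weight_off_ge0 b j w :
  (forall i, 0 <= b i <= 1) -> 0 <= coin_weight_off b j w.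
Proof.
move=> b01; apply: prodr_ge0 => i _; have /andP[b0 b1] := b01 i.
by case: (w i); rewrite ?subr_ge0.
Qed.

Lemma coin_weight_off_flip b j w :
  coin_weight_off b j (flip j w) = coin_weight_off b j w.
Proof. by apply: eq_bigr => i /negbTE ij; rewrite ffunE ij. Qed.

Lemma coin_weight_off_upd b j x : coin_weight_off (upd b j x) j =1 coin_weight_off b j.
Proof. by move=> w; apply: eq_bigr => i /negbTE ij; rewrite /upd ij. Qed.

Lemma coin_mean_split b j h : coin_mean b h =
  b j * (\sum_(w : coins | w j) coin_weight_off b j w * h w) +
  (1 - b j) * (\sum_(w : coins | ~~ w j) coin_weight_off b j w * h w).
Proof.
rewrite /coin_mean (bigID (fun w : coins => w j)) /= !mulr_sumr.
by congr (_ + _); apply: eq_bigr => w wj; rewrite (coin_weightD1 _ j) ?wj ?(negbTE wj) mulrA.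
Qed.

Lemma coin_mean_upd_le b j x h : (forall i, 0 <= b i <= 1) -> b j <= x ->
  monotone_coins h -> coin_mean b h <= coin_mean (upd b j x) h.
Proof.
move=> b01 bjx hmono; rewrite !(coin_mean_split _ j) /upd eqxx.
under [X in _ <= _ * X + _]eq_bigr do rewrite coin_weight_off_upd.
under [X in _ <= _ + _ * X]eq_bigr do rewrite coin_weight_off_upd.
set A := \sum_(w : coins | w j) _; set B := \sum_(w : coins | ~~ w j) _.
(* Both sides are affine in the bias of coin j, with slope A - B. *)
have BA : B <= A.
  rewrite /B (reindex_inj (inv_inj (flipK j))) /=.
  rewrite (eq_bigl (fun w : coins => w j)) => [|w]; last by rewrite ffunE eqxx negbK.
  apply: ler_sum => w wj; rewrite coin_weight_off_flip.
  apply/ler_wpM2l/hmono; first exact: coin_weight_off_ge0.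
  by move=> i; rewrite ffunE; case: eqP => [->|].
nra.
Qed.

Lemma coin_mean_le b b' h : monotone_coins h ->
  (forall i, 0 <= b i <= b' i) -> (forall i, b' i <= 1) ->
  coin_mean b h <= coin_mean b' h.
Proof.
move=> hmono + b'1; have [n] := ubnP #|[set i | b i != b' i]|.
elim: n b => // n IH b; rewrite ltnS => ndiff bb'.
have b01 i : 0 <= b i <= 1 by case/andP: (bb' i) => -> /le_trans->.
case: (set_0Vmem [set i | b i != b' i]) => [D0|[j]].
  rewrite le_eqVlt (eq_coin_mean h (b' := b')) ?eqxx // => i.
  by apply/eqP/negbNE/negP => bi; have := in_set0 i; rewrite -D0 inE bi.
rewrite inE => bj.
have bjb'j : b j <= b' j by case/andP: (bb' j).
apply: le_trans (coin_mean_upd_le b01 bjb'j hmono) (IH _ _ _).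
  have -> : [set i | upd b j (b' j) i != b' i] = [set i | b i != b' i] :\ j.
    by apply/setP => i; rewrite !inE /upd; case: (i =P j) => [->|]; rewrite ?eqxx.
  by move: ndiff; rewrite (cardsD1 j) inE bj.
move=> i; rewrite /upd; case: eqP => [->|_] //.
by rewrite lexx andbT (le_trans _ bjb'j) //; case/andP: (b01 j).
Qed.

Definition swap_coins (i j : 'I_I) (w : coins) : coins := [ffun k => w (tperm i j k)].

Lemma swap_coinsK i j : involutive (swap_coins i j).
Proof. by move=> w; apply/ffunP => k; rewrite !ffunE tpermK. Qed.

Lemma coin_mean_tperm b h i j :
  coin_mean b h = coin_mean (b \o tperm i j) (h \o swap_coins i j).
Proof.
rewrite /coin_mean (reindex_inj (inv_inj (swap_coinsK i j))) /=.
apply: eq_bigr => w _; congr (_ * _).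
rewrite /coin_weight (reindex_inj (@perm_inj _ (tperm i j))) /=.
by apply: eq_bigr => k _; rewrite ffunE tpermK.
Qed.

Lemma coin_sum_swap_le lo hi i j (w : coins) :
  i != j -> hi i - lo i <= hi j - lo j -> w j ->
  coin_sum lo hi (swap_coins i j w) <= coin_sum lo hi w.
Proof.
move=> ij dij wj; have ji : j != i by rewrite eq_sym.
rewrite /coin_sum (bigD1 i) // [X in _ <= X](bigD1 i) //=.
rewrite (bigD1 j) // [X in _ <= _ + X](bigD1 j) //=.
rewrite !ffunE tpermL tpermR wj.
under eq_bigr => k /andP[ki kj] do rewrite ffunE tpermD 1?eq_sym //.
by case: (w i); lra.
Qed.

(* The uncertain coin costs most on the pair with the wider gap, so moving it
   from pair j to the narrower pair i raises the tail probability. *)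
Lemma coin_mean_tperm_le b lo hi c i j : i != j -> hi i - lo i <= hi j - lo j ->
  (forall k, 0 <= b k <= 1) -> b j = 1 ->
  coin_mean (b \o tperm i j) (coin_tail lo hi c) <= coin_mean b (coin_tail lo hi c).
Proof.
move=> ij dij b01 bj1.
rewrite (coin_mean_tperm _ _ i j) (@eq_coin_mean _ b) => [|k /=]; last by rewrite tpermK.
apply: ler_sum => w _; case wj: (w j); last first.
  by rewrite (coin_weightD1 _ j) wj bj1 subrr !mul0r.
apply/ler_wpM2l/ind_ge_le/coin_sum_swap_le => //; exact: coin_weight_ge0.
Qed.

Lemma biased_ge0_le1 beta (S : {set 'I_I}) :
  0 <= beta <= 1 -> forall k, 0 <= biased beta S k <= 1.
Proof. by move=> ? k; rewrite /biased; case: ifP; rewrite ?ler01 ?lexx. Qed.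

Lemma biased_tperm beta (S : {set 'I_I}) i j : i \notin S -> j \in S ->
  biased beta (i |: (S :\ j)) \o tperm i j =1 biased beta S.
Proof.
move=> iS jS k; have ji : (j == i) = false by apply: contraNF iS => /eqP <-.
rewrite /biased /= !inE.
by case: tpermP => [->|->|/eqP ki /eqP kj];
  rewrite ?eqxx ?(negbTE iS) ?jS ?ji ?(negbTE ki) ?(negbTE kj).
Qed.

Lemma coin_mean_biased_le beta lo hi c (S T : {set 'I_I}) :
  0 <= beta <= 1 -> (forall i, lo i <= hi i) ->
  (forall i j, i \in T -> j \notin T -> hi i - lo i <= hi j - lo j) -> (#|T| <= #|S|)%N ->
  coin_mean (biased beta S) (coin_tail lo hi c) <=
  coin_mean (biased beta T) (coin_tail lo hi c).
Proof.
move=> beta01 lohi dT; have [n] := ubnP #|T :\: S|; elim: n S => // n IH S.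
rewrite ltnS => nTS TS; case: (set_0Vmem (T :\: S)) => [TS0|[i]].
  apply: coin_mean_le (coin_tail_monotone c lohi) _ _ => k; last first.
    by case/andP: (biased_ge0_le1 T beta01 k).
  have /andP[beta0 beta1] := beta01; rewrite /biased.
  case: ifP => kS; case: ifP => kT; rewrite ?lexx ?ler01 ?beta0 ?beta1 //.
  by have := in_set0 k; rewrite -TS0 !inE kS kT.
rewrite inE => /andP[iS iT].
case: (set_0Vmem (S :\: T)) => [ST0|[j]].
  have : S \proper T by apply/properP; split; [rewrite -setD_eq0 ST0|exists i].
  by move/proper_card; rewrite ltnNge TS.
rewrite inE => /andP[jT jS].
have ij : i != j by apply: contraNneq jT => <-.
rewrite -(eq_coin_mean _ (biased_tperm beta iS jS)).
apply: (le_trans (coin_mean_tperm_le c ij (dT _ _ iT jT) (biased_ge0_le1 _ beta01) _)).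
  by rewrite /biased !inE eqxx eq_sym (negbTE ij).
apply: IH.
- have -> : T :\: (i |: (S :\ j)) = (T :\: S) :\ i.
    apply/setP => k; rewrite !inE; case: (k =P i) => [->|] //=.
    by case: (k =P j) => [->|] //=; rewrite (negbTE jT) andbF.
  by move: nTS; rewrite [#|T :\: S|](cardsD1 i) !inE iS iT.
- by rewrite cardsU1 (cardsD1 j S) jS !inE (negbTE iS) andbF in TS *.
Qed.

End IndependentCoins.

Lemma count_le_nth_sort d (T : orderType d) (x0 x : T) (s : seq T) k :
  (0 < k <= size s)%N -> (nth x0 (sort <=%O s) k.-1 <= x)%O ->
  (k <= count (fun y => y <= x)%O s)%N.
Proof.
case/andP=> k0 ks kth.
rewrite -(count_sort <=%O) -(cat_take_drop k (sort _ s)) count_cat.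
set t := sort _ s; have tsz : size t = size s by rewrite size_sort.
suff: all (fun y => y <= x)%O (take k t).
  by rewrite all_count => /eqP ->; rewrite size_takel ?tsz // leq_addr.
apply/(all_nthP x0) => m; rewrite size_takel ?tsz // => mk.
rewrite nth_take //; apply: le_trans kth.
apply: (sorted_leq_nth le_trans lexx x0 (sort_sorted le_total s)); rewrite ?inE ?tsz.
- exact: leq_trans mk ks.
- by rewrite (leq_trans _ ks) // ltn_predL.
- by rewrite -ltnS prednK.
Qed.

Lemma card_set_count (T : finType) (P : pred T) : #|[set x | P x]| = count P (enum T).
Proof.
rewrite cardsE cardE /enum_mem size_filter count_filter.
by apply: eq_count => x; rewrite /= andbT.
Qed.

Lemma card_gamma_star_le (R : realType) (I : nat) (p : 'I_I -> 'I_2 -> R) k G0 :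
  (0 < k <= I)%N -> (gamma_order_stat p k <= G0)%E ->
  (k <= #|[set i | gamma_star (p i) <= G0]%E|)%N.
Proof.
move=> kI kth; rewrite card_set_count -(count_map _ (fun g => g <= G0)%E).
by apply: count_le_nth_sort kth; rewrite size_map size_enum_ord.
Qed.

Lemma ord2_cases (j : 'I_2) : j = ord0 \/ j = ord_max.
Proof. by case: j => [[|[|n]] jlt]; [left|right|] => //; apply: val_inj. Qed.

Definition other (j : 'I_2) : 'I_2 := if j == ord0 then ord_max else ord0.

Lemma other_neq j : (other j == j) = false.
Proof. by case: (ord2_cases j) => ->. Qed.

Lemma other_eq j k : k != j -> k = other j.
Proof. by case: (ord2_cases j) => ->; case: (ord2_cases k) => ->. Qed.

Lemma upper_prob_ge0_le1 (R : realType) (G : \bar R) :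
  (0 <= G)%E -> 0 <= upper_prob G <= 1.
Proof.
case: G => [x| |] //= x0; last by rewrite ler01 lexx.
rewrite lee_fin in x0; rewrite divr_ge0 ?ler_pdivrMr /=; lra.
Qed.

Section MatchedPairs.
Variables (R : realType) (I : nat) (p q : 'I_I -> 'I_2 -> R).
Hypothesis p_ge0 : forall i j, 0 <= p i j.
Hypothesis p_sum1 : forall i, \sum_(j < 2) p i j = 1.

Definition hi_unit i : 'I_2 := if q i ord0 <= q i ord_max then ord_max else ord0.
Definition p_hi i := p i (hi_unit i).
Definition q_lo i := Num.min (q i ord0) (q i ord_max).
Definition q_hi i := Num.max (q i ord0) (q i ord_max).

Lemma p_pair_sum i : p i ord0 + p i ord_max = 1.
Proof. by rewrite -(p_sum1 i) big_ord_recl big_ord1; congr (_ + p i _); apply: val_inj. Qed.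

Lemma p_other i j : p i (other j) = 1 - p i j.
Proof.
have := p_pair_sum i.
by case: (ord2_cases j) => ->; rewrite /other /=; lra.
Qed.

Lemma p_hi_ge0_le1 i : 0 <= p_hi i <= 1.
Proof. by rewrite p_ge0 /= -subr_ge0 -p_other. Qed.

Lemma q_lo_le_hi i : q_lo i <= q_hi i.
Proof.
by rewrite /q_lo /q_hi maxEle minEle; case: ifP => // /negbT; rewrite -ltNge => /ltW.
Qed.

Lemma q_hi_sub_lo i : q_hi i - q_lo i = `|q i ord0 - q i ord_max|.
Proof.
rewrite /q_lo /q_hi maxEle minEle; case: ifP => q01.
  by rewrite distrC ger0_norm ?subr_ge0.
by rewrite ger0_norm // subr_ge0 ltW // ltNge q01.
Qed.

Lemma prob_T_ge_coin_mean c : prob_T_ge p q c = coin_mean p_hi (coin_tail q_lo q_hi c).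
Proof.
pose z_of (w : {ffun 'I_I -> bool}) : {ffun 'I_I -> 'I_2} :=
  [ffun i => if w i then hi_unit i else other (hi_unit i)].
rewrite /prob_T_ge /coin_mean (reindex z_of); last first.
  exists (fun z : {ffun 'I_I -> 'I_2} => [ffun i => z i == hi_unit i]) => [w _|z _];
    apply/ffunP => i; rewrite !ffunE.
    by case: (w i); rewrite ?eqxx ?other_neq.
  by case: eqP => [-> //|/eqP/other_eq <-].
apply: eq_bigr => w _; congr (_ * _).
  by apply: eq_bigr => i _; rewrite ffunE /p_hi; case: (w i); rewrite ?p_other.
congr (if c <= _ then _ else _); apply: eq_bigr => i _.
rewrite ffunE /hi_unit /q_lo /q_hi maxEle minEle.
by case: (q i ord0 <= q i ord_max); case: (w i).
Qed.

Lemma p_hi_le_upper_prob G0 i :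
  (gamma_star (p i) <= G0)%E -> p_hi i <= upper_prob G0.
Proof.
have := p_pair_sum i; rewrite /gamma_star /p_hi /hi_unit.
set u := p i ord0; set v := p i ord_max => uv1.
have pM : p i (hi_unit i) <= Num.max u v.
  by rewrite /hi_unit; case: ifP; rewrite le_max lexx ?orbT.
have mM : Num.min u v + Num.max u v = 1 by rewrite maxEle minEle; case: ifP; lra.
have m0 : 0 <= Num.min u v by rewrite le_min !p_ge0.
case: G0 => [x| |] /=; [|by case/andP: (p_hi_ge0_le1 i)|by case: eqP].
case: eqP => [//|/eqP mn0]; rewrite lee_fin => Mmx.
have mpos : 0 < Num.min u v by rewrite lt_def mn0 m0.
have x0 : 0 <= x by apply: le_trans Mmx; rewrite divr_ge0 // le_max p_ge0.
rewrite ler_pdivrMr // in Mmx; rewrite ler_pdivlMr; last lra.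
have : p i (hi_unit i) * (1 + x) <= Num.max u v * (1 + x) by apply: ler_wpM2r; lra.
nra.
Qed.

End MatchedPairs.

Theorem theorem2 (R : realType) (I : nat)
  (p : 'I_I -> 'I_2 -> R) (q : 'I_I -> 'I_2 -> R)
  (p_ge0 : forall i j, 0 <= p i j)
  (p_sum1 : forall i, \sum_(j < 2) p i j = 1)
  (k : nat) (k_ge1 : (1 <= k)%N) (k_leI : (k <= I)%N)
  (G0 : \bar R) (G0_ge1 : (1%:E <= G0)%E)
  (Ik : {set 'I_I}) (card_Ik : #|Ik| = k)
  (Ik_smallest : forall i j, i \in Ik -> j \notin Ik ->
      `|q i ord0 - q i ord_max| <= `|q j ord0 - q j ord_max|)
  (hbias : (gamma_order_stat p k <= G0)%E) :
  forall c : R, prob_T_ge p q c <= prob_Tbar_ge (gamma_vec G0 Ik) q c.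
Proof.
move=> c; set beta := upper_prob G0; set S := [set i | p_hi p q i <= beta].
have beta01 : 0 <= beta <= 1 by apply/upper_prob_ge0_le1/(le_trans _ G0_ge1).
have Ik_le_S : (#|Ik| <= #|S|)%N.
  rewrite card_Ik; apply: leq_trans (card_gamma_star_le _ hbias) _; first by rewrite k_ge1.
  by apply/subset_leq_card/subsetP => i; rewrite !inE; apply: p_hi_le_upper_prob.
rewrite (prob_T_ge_coin_mean q p_sum1).
apply: (le_trans (coin_mean_le (coin_tail_monotone c (q_lo_le_hi q)) (b' := biased beta S) _ _)).
- move=> i; case/andP: (p_hi_ge0_le1 q p_ge0 p_sum1 i) => -> p_hi1.
  by rewrite /biased inE; case: ifP.
- by move=> i; case/andP: (biased_ge0_le1 S beta01 i).
apply: le_trans (coin_mean_biased_le c beta01 (q_lo_le_hi q) _ Ik_le_S) _.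
  by move=> i j; rewrite !q_hi_sub_lo; apply: Ik_smallest.
rewrite (@eq_coin_mean _ _ _ (fun i => upper_prob (gamma_vec G0 Ik i))) // => i.
by rewrite /biased /gamma_vec; case: ifP.
Qed.
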